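(* Let $d,d'\in\mathcal D$ with quantities $(\mathbf P,\mathbf r,J_\mu,J_{\mu,\sigma},\mathbf g)$ for $d$ and $(\mathbf P',\mathbf r')$ for $d'$. For $\delta\in[0,1]$ let $\boldsymbol\pi^\delta$, $J^\delta_\mu$, $J^\delta_{\mu,\sigma}$ be the stationary distribution, mean and combined metric of the mixed policy $d^{\delta,d'}$. Then $$J^\delta_{\mu,\sigma}-J_{\mu,\sigma}=\delta\,\boldsymbol\pi^\delta\Big[(\mathbf P'-\mathbf P)\mathbf g+\mathbf r'-\beta(\mathbf r'-J_\mu\mathbf 1)^2_\odot-\mathbf r+\beta(\mathbf r-J_\mu\mathbf 1)^2_\odot\Big]+\beta(J^\delta_\mu-J_\mu)^2 .$$
   Context: Let $\mathcal S=\{1,\dots,S\}$ be a finite state space and $\mathcal A$ a finite action set, with transition probabilities $p^a(i,j)$ ($\sum_j p^a(i,j)=1$) and rewards $r(i,a)\in\mathbb R$. A deterministic stationary policy is a map $d:\mathcal S\to\mathcal A$; $\mathcal D$ is the set of these; $\mathbf P^d$ has entries $p^{d(i)}(i,j)$ and $\mathbf r^d$ has entries $r(i,d(i))$. Standing assumption: every $\mathbf P^d$, $d\in\mathcal D$, is irreducible. For $d$: $\boldsymbol\pi^d$ is the unique stationary distribution (row vector, all entries positive), $J^d_\mu=\boldsymbol\pi^d\mathbf r^d$, and for fixed $\beta>0$, $J^d_{\mu,\sigma}=\boldsymbol\pi^d\mathbf f^d$ with $f^d(i)=r(i,d(i))-\beta(r(i,d(i))-J^d_\mu)^2$; $\mathbf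 g^d$ is any solution of $\mathbf g^d=\mathbf f^d-J^d_{\mu,\sigma}\mathbf 1+\mathbf P^d\mathbf g^d$. Mixed policy: for $d,d'\in\mathcal D$ and $\delta\in[0,1]$, $d^{\delta,d'}$ is the randomized stationary policy which at each visit to state $i$ independently takes action $d(i)$ with probability $1-\delta$ and $d'(i)$ with probability $\delta$. Its transition matrix is $\mathbf P^\delta=\mathbf P+\delta(\mathbf P'-\mathbf P)$ (irreducible, with unique positive stationary distribution $\boldsymbol\pi^\delta$), its mean is $J^\delta_\mu=\boldsymbol\pi^\delta[\mathbf r+\delta(\mathbf r'-\mathbf r)]$, and its combined metric is $J^\delta_{\mu,\sigma}=\boldsymbol\pi^\delta\mathbf f^\delta$ with $f^\delta(i)=(1-\delta)[r(i)-\beta(r(i)-J^\delta_\mu)^2]+\delta[r'(i)-\beta(r'(i)-J^\delta_\mu)^2]$. For a vector $\mathbf v$, $(\mathbf v)^2_\odot$ is its componentwise square. *)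

From HB Require Import structures.
From mathcomp Require Import all_boot all_order all_algebra.
Set Implicit Arguments. Unset Strict Implicit. Unset Printing Implicit Defensive.
Import Order.TTheory GRing.Theory Num.Theory.
Local Open Scope ring_scope.

Section MDP.
Variable R : realFieldType.

(* States are 'I_n.+1 (S = n+1 >= 1 states). *)

Definition stochastic n (P : 'M[R]_n) : Prop :=
  (forall i j, 0 <= P i j) /\ (forall i, \sum_j P i j = 1).

Definition irreducible n (P : 'M[R]_n.+1) : Prop :=
  forall i j, exists k : nat, 0 < (P ^+ k) i j.

Definition is_stationary n (P : 'M[R]_n) (pi : 'rV[R]_n) : Prop :=
  pi *m P = pi /\ \sum_i pi 0 i = 1 /\ (forall i, 0 <= pi 0 i).

Definition dotv n (u : 'rV[R]_n) (v : 'cV[R]_n) : R := \sum_i u 0 i * v i 0.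

Definition sqv n (v : 'cV[R]_n) : 'cV[R]_n := map_mx (fun x => x ^+ 2) v.

Definition ones n : 'cV[R]_n := const_mx 1.

Variable A : finType.

Definition polP n (p : A -> 'M[R]_n) (d : 'I_n -> A) : 'M[R]_n :=
  \matrix_(i, j) p (d i) i j.

Definition polr n (r : 'I_n -> A -> R) (d : 'I_n -> A) : 'cV[R]_n :=
  \col_i r i (d i).

Definition fvec n (beta J : R) (rv : 'cV[R]_n) : 'cV[R]_n :=
  \col_i (rv i 0 - beta * (rv i 0 - J) ^+ 2).

Definition fmix n (beta delta J : R) (rv rv' : 'cV[R]_n) : 'cV[R]_n :=
  \col_i ((1 - delta) * (rv i 0 - beta * (rv i 0 - J) ^+ 2)
          + delta * (rv' i 0 - beta * (rv' i 0 - J) ^+ 2)).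

End MDP.

From HB Require Import structures.
From mathcomp Require Import all_boot all_order all_algebra.
From mathcomp Require Import ring lra.
Import Order.TTheory GRing.Theory Num.Theory.
Local Open Scope ring_scope.
Set Implicit Arguments.

(* Write f = r - beta (r - J_mu 1)^2 for the reward of the combined metric of d,
   and W = r + delta (r' - r) for the mean reward vector of the mixed policy.
   The gap J^delta_{mu,sigma} - J_{mu,sigma} splits as
     (pi^delta f^delta - pi^delta f) + (pi^delta f - J_{mu,sigma}).
   - The second bracket is the classical performance-difference term: pairing
     the Poisson equation of d with the stationarity of pi^delta for
     P + delta (P' - P) gives delta pi^delta (P' - P) g  [poisson_gap].
   - The first bracket is computed pointwise: f^delta - f minus
     delta (r' - beta sq' - r + beta sq) equals
     beta (J^delta_mu - J_mu) (2 W - (J_mu + J^delta_mu) 1)  [fmix_sub_fvec],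
     whose pi^delta-average is beta (J^delta_mu - J_mu)^2 because
     pi^delta W = J^delta_mu and pi^delta 1 = 1  [mixed_reward_gap]. *)

Section Pairing.
Variables (R : realFieldType) (n : nat).
Implicit Types (u : 'rV[R]_n) (v w : 'cV[R]_n).

Lemma dotvE u v : dotv u v = (u *m v) 0 0.
Proof. by rewrite /dotv mxE; apply: eq_bigr. Qed.

Lemma dotvD u v w : dotv u (v + w) = dotv u v + dotv u w.
Proof. by rewrite !dotvE mulmxDr mxE. Qed.

Lemma dotvN u v : dotv u (- v) = - dotv u v.
Proof. by rewrite !dotvE mulmxN mxE. Qed.

Lemma dotvZ u (a : R) v : dotv u (a *: v) = a * dotv u v.
Proof. by rewrite !dotvE -scalemxAr mxE. Qed.

Lemma dotvM u (M : 'M[R]_n) v : dotv u (M *m v) = dotv (u *m M) v.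
Proof. by rewrite !dotvE mulmxA. Qed.

Lemma dotv_ones {u} : \sum_i u 0 i = 1 -> dotv u (ones R n) = 1.
Proof. by move=> <-; apply: eq_bigr => i _; rewrite mxE mulr1. Qed.

End Pairing.

Section MixedPolicyGap.
Variables (R : realFieldType) (n : nat).
Variable pid : 'rV[R]_n.
Hypothesis pid_ones : dotv pid (ones R n) = 1.

Lemma poisson_gap (P P' : 'M[R]_n) (f g : 'cV[R]_n) (J delta : R) :
  g = f - J *: ones R n + P *m g ->
  pid *m (P + delta *: (P' - P)) = pid ->
  dotv pid f - J = delta * dotv pid ((P' - P) *m g).
Proof.
move=> Hg Hst.
have via_stationarity :
    dotv pid g = dotv pid (P *m g) + delta * dotv pid ((P' - P) *m g).
  by rewrite -{1}Hst -dotvM mulmxDl -scalemxAl dotvD dotvZ.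
have via_poisson : dotv pid g = dotv pid f - J + dotv pid (P *m g).
  by rewrite {1}Hg !dotvD dotvN dotvZ pid_ones mulr1.
by apply: (addIr (dotv pid (P *m g))); rewrite -via_poisson via_stationarity addrC.
Qed.

Lemma fmix_sub_fvec (beta delta J Jd : R) (rv rv' : 'cV[R]_n) :
  fmix beta delta Jd rv rv' - fvec beta J rv
    - delta *: (rv' - beta *: sqv (rv' - J *: ones R n)
                - rv + beta *: sqv (rv - J *: ones R n))
  = (beta * (Jd - J)) *: (2%:R *: (rv + delta *: (rv' - rv))
                           - (J + Jd) *: ones R n).
Proof. by apply/matrixP => i j; rewrite (ord1 j) !mxE; ring. Qed.

Lemma mixed_reward_gap (beta delta J : R) (rv rv' : 'cV[R]_n) :
  let Jd := dotv pid (rv + delta *: (rv' - rv)) in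
  dotv pid (fmix beta delta Jd rv rv') - dotv pid (fvec beta J rv)
  = delta * dotv pid (rv' - beta *: sqv (rv' - J *: ones R n)
                      - rv + beta *: sqv (rv - J *: ones R n))
    + beta * (Jd - J) ^+ 2.
Proof.
move=> Jd.
have mean_affine :
    dotv pid (2%:R *: (rv + delta *: (rv' - rv)) - (J + Jd) *: ones R n) = Jd - J.
  by rewrite dotvD dotvN !dotvZ -/Jd pid_ones; ring.
have := congr1 (dotv pid) (fmix_sub_fvec beta delta J Jd rv rv').
rewrite dotvZ mean_affine dotvD dotvD !dotvN dotvZ => gap.
by rewrite expr2 mulrA -gap; ring.
Qed.

End MixedPolicyGap.

Theorem mainTheorem5 (R : realFieldType) (A : finType) (n : nat)
  (p : A -> 'M[R]_n.+1) (r : 'I_n.+1 -> A -> R) (beta : R)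
  (Hp : forall a, stochastic (p a))
  (Hirr : forall d : 'I_n.+1 -> A, irreducible (polP p d))
  (Hbeta : 0 < beta)
  (d d' : 'I_n.+1 -> A)
  (pi : 'rV[R]_n.+1) (Hpi : is_stationary (polP p d) pi)
  (g : 'cV[R]_n.+1)
  (Hg : g = fvec beta (dotv pi (polr r d)) (polr r d)
            - dotv pi (fvec beta (dotv pi (polr r d)) (polr r d)) *: ones R n.+1
            + polP p d *m g)
  (delta : R) (Hdelta : 0 <= delta <= 1)
  (pid : 'rV[R]_n.+1)
  (Hpid : is_stationary (polP p d + delta *: (polP p d' - polP p d)) pid) :
  let P := polP p d in
  let P' := polP p d' in
  let rv := polr r d in
  let rv' := polr r d' in
  let Jmu := dotv pi rv in
  let Jms := dotv pi (fvec beta Jmu rv) in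
  let Jmu_d := dotv pid (rv + delta *: (rv' - rv)) in
  let Jms_d := dotv pid (fmix beta delta Jmu_d rv rv') in
  Jms_d - Jms =
    delta * dotv pid ((P' - P) *m g + rv' - beta *: sqv (rv' - Jmu *: ones R n.+1)
                      - rv + beta *: sqv (rv - Jmu *: ones R n.+1))
    + beta * (Jmu_d - Jmu) ^+ 2.
Proof.
move=> P P' rv rv' Jmu Jms Jmu_d Jms_d.
have [pid_inv [pid_sum _]] := Hpid.
have pid_ones := dotv_ones pid_sum.
set f := fvec beta Jmu rv.
have split_gap : Jms_d - Jms = (Jms_d - dotv pid f) + (dotv pid f - Jms).
  by rewrite addrA subrK.
have regroup : forall x : 'cV[R]_n.+1,
    x + rv' - beta *: sqv (rv' - Jmu *: ones R n.+1)
      - rv + beta *: sqv (rv - Jmu *: ones R n.+1)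
  = x + (rv' - beta *: sqv (rv' - Jmu *: ones R n.+1)
         - rv + beta *: sqv (rv - Jmu *: ones R n.+1)).
  by move=> x; rewrite !addrA.
have perf_diff : dotv pid f - Jms = delta * dotv pid ((P' - P) *m g) :=
  poisson_gap pid_ones Hg pid_inv.
rewrite regroup dotvD mulrDr split_gap perf_diff.
rewrite (mixed_reward_gap pid_ones beta delta Jmu rv rv') -/Jmu_d.
by rewrite [LHS]addrC addrA.
Qed.
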